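(* Let $\beta\colon[0,\infty)\to(0,1)$ be continuous, let $D$ be the multistable subordinator with index $\beta$ and let $E(r)=\inf\{t\ge0: D(t)\ge r\}$, $r\ge0$, be its right-continuous inverse (see the context). Then the sample paths of $E$ are almost surely continuous and non-decreasing.
   Context: Let $\beta\colon[0,\infty)\to(0,1)$ be a continuous function. Let $\Pi=\{(t_i,x_i)\}$ be a Poisson point process on $[0,\infty)\times(0,\infty)$ with intensity measure $\nu(dt,dx)=\beta(t)x^{-\beta(t)-1}\,dt\,dx$. The multistable subordinator with index $\beta$ is the process $D(t)=\sum_{(t_i,x_i)\in\Pi,\ t_i\le t}x_i$, $t\ge0$ (this sum is a.s. finite since $\int_0^t(1-\beta(s))^{-1}ds<\infty$). *)

From HB Require Import structures.
From mathcomp Require Import all_boot all_order all_algebra.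
From mathcomp Require Import all_classical all_reals all_analysis measurable_realfun.
Set Implicit Arguments. Unset Strict Implicit. Unset Printing Implicit Defensive.
Import Order.TTheory GRing.Theory Num.Theory.
Import numFieldNormedType.Exports.
Local Open Scope classical_set_scope.
Local Open Scope ring_scope.

Section multistable.
Context {R : realType}.

(* Poisson probability mass function p_m(k) = m^k / k! * e^{-m}
   (valid also for m = 0, where it is the Dirac mass at 0; we do not use the
   library's [poisson_pmf], which returns 1 for every k when the rate is 0). *)
Definition pois_pmf (m : R) (k : nat) : R := m ^+ k / k`!%:R * expR (- m).

(* Intensity measure nu(dt,dx) = beta(t) x^{-beta(t)-1} dt dx on
   [0,oo) x (0,oo), evaluated on a set A of R * R (as an iterated integral,
   i.e. the product measure formula). *)
Definition msub_intensity (beta : R -> R) (A : set (R * R)) : \bar R :=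
  (\int[@lebesgue_measure R]_(t in [set t : R | (0 <= t)%R])
     (\int[@lebesgue_measure R]_(x in xsection A t `&` [set x : R | (0 < x)%R])
        (beta t * powR x (- beta t - 1))%R%:E))%E.

Definition count_in (Pi : set (R * R)) (A : set (R * R)) : \bar R :=
  (\esum_(p in Pi `&` A) 1)%E.

Definition is_poisson_point_process {d : measure_display} {Omega : measurableType d}
    (P : probability Omega R) (nu : set (R * R) -> \bar R)
    (Pi : Omega -> set (R * R)) : Prop :=
  [/\ (forall A, measurable A -> measurable_fun [set: Omega] (fun w => count_in (Pi w) A : \bar R)),
      (forall A, measurable A -> (nu A < +oo)%E -> forall k : nat,
          P [set w | count_in (Pi w) A = (k%:R)%:E] = (pois_pmf (fine (nu A)) k)%:E),
      (forall A, measurable A -> nu A = +oo%E ->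
          P [set w | count_in (Pi w) A = +oo%E] = 1%E) &
      (forall (n : nat) (A : 'I_n -> set (R * R)) (k : 'I_n -> nat),
          (forall i, measurable (A i)) ->
          (forall i j, i != j -> A i `&` A j = set0) ->
          P (\bigcap_(i in [set: 'I_n]) [set w | count_in (Pi w) (A i) = ((k i)%:R)%:E])
          = (\prod_(i < n) P [set w | count_in (Pi w) (A i) = ((k i)%:R)%:E])%E)].

Definition msub_D (Pi : set (R * R)) (t : R) : \bar R :=
  (\esum_(p in Pi `&` [set p : R * R | (p.1 <= t)%R]) (p.2)%:E)%E.

Definition msub_E (D : R -> \bar R) (r : R) : R :=
  inf [set t : R | 0 <= t /\ (r%:E <= D t)%E].

End multistable.

From HB Require Import structures.
From mathcomp Require Import all_boot all_order all_algebra.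
From mathcomp Require Import all_classical all_reals all_analysis measurable_realfun.
From mathcomp Require Import lra.
Set Implicit Arguments. Unset Strict Implicit. Unset Printing Implicit Defensive.
Import Order.TTheory GRing.Theory Num.Theory.
Import numFieldNormedType.Exports.
Local Open Scope classical_set_scope.
Local Open Scope ring_scope.

(* E jumps exactly where D is constant on an interval, so E is nondecreasing
   and continuous as soon as D is nondecreasing, strictly increasing (while
   finite) and unbounded.  These path properties follow from three properties
   of the configuration Pi: all marks are positive, every time interval ]s, t]
   contains a point, and infinitely many marks are >= 1.  Each of them says
   that some Poisson count vanishes or is infinite, which holds almost surely
   because the intensity of the corresponding set is 0 or +oo: the density
   beta(t) x^(-beta(t)-1) is not integrable at x = 0 and has mass 1 on
   [1, +oo[.  Countably many grid intervals suffice for the time intervals. *)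

Section first_passage_time.
Context {R : realType}.
Variable D : R -> \bar R.
Hypothesis D_ge0 : forall t, (0 <= D t)%E.
Hypothesis D_nd : {homo D : s t / s <= t >-> (s <= t)%E}.
Hypothesis D_strict : forall s t, 0 <= s -> s < t -> (D s < +oo)%E -> (D s < D t)%E.
Hypothesis D_unbounded : forall r : R, exists t, 0 <= t /\ (r%:E <= D t)%E.

Let S r := [set t : R | 0 <= t /\ (r%:E <= D t)%E].

Let S_has_inf r : has_inf (S r).
Proof. by split; [have [t ?] := D_unbounded r; exists t | exists 0 => t []]. Qed.

Lemma msub_E_ge0 r : 0 <= msub_E D r.
Proof. by apply: lb_le_inf (S_has_inf r).1 _ => t []. Qed.

Lemma msub_E_le r t : 0 <= t -> (r%:E <= D t)%E -> msub_E D r <= t.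
Proof. by move=> t0 rt; apply: (ge_inf (S_has_inf r).2). Qed.

Lemma msub_E_ge r x : (forall t, 0 <= t -> (r%:E <= D t)%E -> x <= t) ->
  x <= msub_E D r.
Proof. by move=> h; apply: lb_le_inf (S_has_inf r).1 _ => t [/h]. Qed.

Lemma msub_E_nd : {homo msub_E D : r s / r <= s}.
Proof.
move=> r s rs; apply: msub_E_ge => t t0 st; apply: msub_E_le => //.
by apply: le_trans st; rewrite lee_fin.
Qed.

(* Strict increase of [D] gives [D t > r0] beyond [msub_E D r0], and this
   inequality is stable under small perturbations of [r0]. *)
Lemma msub_E_upper r0 t : msub_E D r0 < t ->
  exists2 e : R, 0 < e & forall r, r < r0 + e -> msub_E D r <= t.
Proof.
move=> Et; have [y [y0 r0y] yt] := inf_lt (S_has_inf r0).1 Et.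
have t0 : 0 <= t by exact: le_trans (ltW yt).
have r0t : (r0%:E < D t)%E.
  have [Dy|Dy] := eqVneq (D y) +oo%E.
    by have := D_nd (ltW yt); rewrite Dy leye_eq => /eqP ->; exact: ltry.
  by apply: le_lt_trans r0y (D_strict y0 yt _); rewrite ltey.
suff [e e0 he] : exists2 e : R, 0 < e & forall r, r < r0 + e -> (r%:E <= D t)%E.
  by exists e => // r /he; exact: msub_E_le.
move: r0t; case: (D t) => [x| |] //=; last by exists 1 => // r _; rewrite leey.
rewrite lte_fin => r0x; exists (x - r0); first by rewrite subr_gt0.
by move=> r; rewrite addrC subrK lee_fin => /ltW.
Qed.

Lemma msub_E_lower r0 t : t < msub_E D r0 ->
  exists2 e : R, 0 < e & forall r, r0 - e < r -> t <= msub_E D r.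
Proof.
move=> tE; have [t0|t0] := ltP t 0.
  by exists 1 => // r _; exact: le_trans (ltW t0) (msub_E_ge0 r).
have Dt : (D t < r0%:E)%E.
  by rewrite ltNge; apply/negP => /(msub_E_le t0); rewrite leNgt tE.
have := D_ge0 t; move: Dt; case Dv: (D t) => [v| |] //; rewrite lte_fin => vr0 _.
exists (r0 - v); first by rewrite subr_gt0.
rewrite opprB addrC subrK => r vr; apply: msub_E_ge => s s0 rs.
rewrite leNgt; apply/negP => st.
by have := le_trans rs (D_nd (ltW st)); rewrite Dv lee_fin leNgt vr.
Qed.

Lemma msub_E_continuous : continuous (msub_E D).
Proof.
move=> r0; apply/cvgrPdist_lt => e e0; have e20 : 0 < e / 2 by rewrite divr_gt0.
have above : msub_E D r0 < msub_E D r0 + e / 2 by rewrite ltrDl.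
have below : msub_E D r0 - e / 2 < msub_E D r0 by rewrite gtrDl oppr_lt0.
have [d1 d10 up] := msub_E_upper above.
have [d2 d20 low] := msub_E_lower below.
apply/nbhs_ballP; exists (Num.min d1 d2) => /=; first by rewrite lt_min d10 d20.
move=> r /=; rewrite lt_min !ltr_distlC => /andP[/andP[_ /up u] /andP[/low l _]].
by apply/andP; split; lra.
Qed.

End first_passage_time.

Lemma count_in_ge1 {R : realType} (Pi A : set (R * R)) p :
  Pi p -> A p -> (1 <= count_in Pi A)%E.
Proof.
move=> Pip Ap; apply: esum_ge; exists [set p]; last by rewrite fsbig_set1.
by split; [exact: finite_set1 | move=> q ->].
Qed.

Section subordinator_paths.
Context {R : realType}.
Variable Pi : set (R * R).
Hypothesis marks_gt0 : forall p, Pi p -> 0 < p.2.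
Hypothesis times_dense : forall s t : R, 0 <= s -> s < t ->
  exists2 p, Pi p & s < p.1 <= t.
Hypothesis large_marks : count_in Pi (setT `*` `[1, +oo[) = +oo%E.

Let mark_ge0 p : Pi p -> (0 <= (p.2)%:E)%E.
Proof. by move=> /marks_gt0 /ltW; rewrite lee_fin. Qed.

Lemma msub_D_ge0 t : (0 <= msub_D Pi t)%E.
Proof. by apply: esum_ge0 => p [/mark_ge0]. Qed.

Let msub_D_split s t : s <= t -> msub_D Pi t = (msub_D Pi s +
  \esum_(p in Pi `&` [set p | (p.1 <= t)%R] `&` ~` [set p | (p.1 <= s)%R])
    (p.2)%:E)%E.
Proof.
move=> st; rewrite /msub_D (esumID [set p | p.1 <= s]); last by move=> p [/mark_ge0].
congr (esum _ _ + _)%E; apply/seteqP; split => p /=; first by move=> [[]].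
by move=> [Pp ps]; do 2?split => //; exact: le_trans st.
Qed.

Lemma msub_D_nd : {homo msub_D Pi : s t / s <= t >-> (s <= t)%E}.
Proof.
move=> s t st; rewrite (msub_D_split st); apply: leeDl.
by apply: esum_ge0 => p [[/mark_ge0]].
Qed.

Lemma msub_D_strict s t : 0 <= s -> s < t -> (msub_D Pi s < +oo)%E ->
  (msub_D Pi s < msub_D Pi t)%E.
Proof.
move=> s0 st Ds_fin; have [p Pp /andP[sp pt]] := times_dense s0 st.
rewrite (msub_D_split (ltW st)).
have Ds_num : msub_D Pi s \is a fin_num by rewrite ge0_fin_numE // msub_D_ge0.
apply: (@lt_le_trans _ _ (msub_D Pi s + (p.2)%:E)%E).
  by rewrite lteDl // lte_fin marks_gt0.
apply: leeD2l; apply: esum_ge; exists [set p]; last by rewrite fsbig_set1.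
split; first exact: finite_set1.
by move=> q /= ->; split; [split|apply/negP; rewrite -ltNge].
Qed.

(* Some finite family of points with marks >= 1 has more than [r] members,
   and all of them occur before the time [t] chosen below. *)
Lemma msub_D_unbounded (r : R) : exists t, 0 <= t /\ (r%:E <= msub_D Pi t)%E.
Proof.
have : (r%:E < count_in Pi (setT `*` `[1%R, +oo[))%E by rewrite large_marks ltry.
rewrite /count_in /esum => /ereal_sup_gt[_ [X [finX XS] <-] rX].
pose t := \sum_(p \in X) `|p.1|.
have Xt p : X p -> p.1 <= t.
  move=> Xp; apply: le_trans (ler_norm _) _; rewrite -lee_fin /t -fsumEFin //.
  rewrite -(@fsbig_set1 _ _ (@GRing.add _ : Monoid.com_law 0%E) _ p
    (fun q => (`|q.1|)%:E)).
  by apply: lee_fsum_nneg_subset => //; apply/subsetP => q /= ->.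
exists t; split; first by apply: fsumr_ge0.
apply: (le_trans (ltW rX)); apply: (@le_trans _ _ (\sum_(p \in X) (p.2)%:E)%R).
  by apply: lee_fsum => // p /XS [_ [_]]; rewrite /= in_itv /= andbT lee_fin.
apply: esum_ge; exists X => //; split => // p Xp.
by split; [have [] := XS p Xp | exact: Xt].
Qed.

End subordinator_paths.

Lemma xsectionX_in {T1 T2} (A : set T1) (B : set T2) t :
  A t -> xsection (A `*` B) t = B.
Proof. by move=> At; apply/seteqP; split => x; rewrite /xsection /= inE; [case|]. Qed.

(* Unlike [ge0_le_integral], this needs no measurability (the integral of a
   nonnegative function is a supremum over simple functions below it): the
   outer integrand of [msub_intensity] is not known to be measurable. *)
Lemma ge0_le_integral_nomeas {d} {T : measurableType d} {R : realType}
    (mu : {measure set T -> \bar R}) (D : set T) (f g : T -> \bar R) :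
  (forall x, D x -> (0 <= f x)%E) -> (forall x, D x -> (f x <= g x)%E) ->
  (\int[mu]_(x in D) f x <= \int[mu]_(x in D) g x)%E.
Proof.
move=> f0 fg; rewrite !ge0_integralE //; last first.
  by move=> x Dx; apply: le_trans (f0 x Dx) (fg x Dx).
apply: ereal_sup_le => _ [h hf <-]; exists h => //= x.
by apply: le_trans (hf x) _; apply: lee_restrict.
Qed.

Section levy_density.
Context {R : realType}.
Local Notation mu := (@lebesgue_measure R).

Lemma gt0_ltr_powR_mono (r : R) : 0 < r ->
  {in Num.nneg &, {mono (fun x => powR x r) : x y / x < y}}.
Proof.
move=> r0 x y x0 y0; apply/idP/idP; last exact: gt0_ltr_powR.
by apply: contraTT; rewrite -!leNgt => yx; exact: (ge0_ler_powR (ltW r0) y0 x0 yx).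
Qed.

Lemma integral_itv_powR_density (b u v : R) : 0 < b -> 0 < u -> u < v ->
  (\int[mu]_(x in `[u, v]) (b * powR x (- b - 1))%:E
    = (powR u (- b) - powR v (- b))%:E)%E.
Proof.
move=> b0 u0 uv; pose F x := - powR x (- b).
have dF x : 0 < x -> derivable F x 1.
  by move=> x0; apply/derivableN/derivable_powR; rewrite in_itv /= x0.
have F'E x : 0 < x -> derive1 F x = b * powR x (- b - 1).
  move=> x0; rewrite derive1N; last by apply: derivable_powR; rewrite in_itv /= x0.
  by rewrite powR_derive1 ?in_itv /= ?x0 // mulNr opprK.
have pos_uv x : x \in `[u, v] -> 0 < x.
  by rewrite in_itv /= => /andP[ux _]; exact: lt_le_trans ux.
have cF : {within `[u, v], continuous F}.
  by apply: derivable_within_continuous => x /pos_uv; exact: dF.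
rewrite (@continuous_FTC2 _ _ F) //.
- by rewrite /F -EFinB; congr EFin; lra.
- apply: derivable_within_continuous => x /pos_uv x0.
  by apply: derivableM => //; apply: derivable_powR; rewrite in_itv /= x0.
- have [_ Fu Fv] := (continuous_within_itvP _ uv).1 cF.
  by split => //; move=> x /subset_itv_oo_cc /pos_uv; exact: dF.
- by move=> x /subset_itv_oo_cc /pos_uv; exact: F'E.
Qed.

Lemma integral_powR_density_ge (b u v : R) (X : set R) : 0 < b -> 0 < u -> u < v ->
  measurable X -> `[u, v] `<=` X -> X `<=` [set x | 0 < x] ->
  ((powR u (- b) - powR v (- b))%:E <=
     \int[mu]_(x in X) (b * powR x (- b - 1))%:E)%E.
Proof.
move=> b0 u0 uv mX uvX Xpos; rewrite -integral_itv_powR_density //.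
apply: ge0_subset_integral => //.
- apply/measurable_EFinP; apply: measurable_funM; first exact: measurable_cst.
  by apply: measurable_funTS; exact: measurable_powR.
- by move=> x _; rewrite lee_fin; apply: mulr_ge0; [exact: ltW|exact: powR_ge0].
Qed.

(* On [[1, 2^(1/b)]] the integral is already [1 - 1/2]. *)
Lemma integral_powR_density_tail_ge (b : R) : 0 < b ->
  ((2^-1)%:E <= \int[mu]_(x in `[1%R, +oo[) (b * powR x (- b - 1))%:E)%E.
Proof.
move=> b0; set K := powR 2 b^-1.
have K1 : 1 < K.
  rewrite -(gt0_ltr_powR_mono b0) ?nnegrE ?powR_ge0 // powR1 /K -powRrM.
  by rewrite mulVf ?gt_eqF // powRr1 // ltr1n.
apply: le_trans (integral_powR_density_ge b0 ltr01 K1 (measurable_itv _) _ _).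
- rewrite /K -powRrM mulrN mulVf ?gt_eqF // powR_inv1 // powR1 lee_fin; lra.
- by move=> x /=; rewrite !in_itv /= => /andP[->].
- by move=> x /=; rewrite in_itv /= andbT => /(lt_le_trans ltr01).
Qed.

(* On [[c^(-1/b), 1]] the integral is [c - 1]. *)
Lemma integral_powR_density_eqy (b : R) : 0 < b ->
  (\int[mu]_(x in `]0%R, +oo[) (b * powR x (- b - 1))%:E = +oo)%E.
Proof.
move=> b0; apply/eq_infty => M; set c := Num.max 0 M + 2.
have c1 : 1 < c by rewrite /c; have := le_max 0 0 M; rewrite lexx /=; lra.
set u := powR c (- b^-1).
have u0 : 0 < u by apply: powR_gt0; lra.
have u1 : u < 1.
  rewrite -(gt0_ltr_powR_mono b0) ?nnegrE ?powR_ge0 // powR1 /u -powRrM.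
  by rewrite mulNr mulVf ?gt_eqF // powR_inv1 ?invf_lt1; lra.
apply: le_trans (integral_powR_density_ge b0 u0 u1 (measurable_itv _) _ _).
- rewrite /u -powRrM mulrNN mulVf ?gt_eqF // powRr1 ?powR1 ?lee_fin; last lra.
  by rewrite /c; have := le_max M 0 M; rewrite lexx orbT; lra.
- by move=> x /=; rewrite !in_itv /= andbT => /andP[/(lt_le_trans u0)].
- by move=> x /=; rewrite in_itv /= andbT.
Qed.

End levy_density.

Lemma ge0_integral_ge_scale_indic {d} {T : measurableType d} {R : realType}
    (mu : {measure set T -> \bar R}) (D A : set T) (g : T -> \bar R) (c : R) :
  measurable D -> measurable A -> 0 <= c ->
  (forall t, D t -> (0 <= g t)%E) -> (forall t, D t -> A t -> (c%:E <= g t)%E) ->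
  (c%:E * mu (A `&` D) <= \int[mu]_(t in D) g t)%E.
Proof.
move=> mD mA c0 g0 gc.
have -> : (c%:E * mu (A `&` D) = \int[mu]_(t in D) (c%:E * (\1_A t)%:E))%E.
  rewrite ge0_integralZl_EFin ?integral_indic //.
  by apply/measurable_EFinP; exact: measurable_indic.
apply: ge0_le_integral_nomeas => t Dt; first by rewrite mule_ge0 // lee_fin.
rewrite indicE; case: (boolP (t \in A)) => [/set_mem At|_].
- by rewrite mule1; exact: gc.
- by rewrite mule0; exact: g0.
Qed.

Section msub_intensity.
Context {R : realType}.
Local Notation mu := (@lebesgue_measure R).
Variable beta : R -> R.
Hypothesis beta_gt0 : forall t, 0 <= t -> 0 < beta t.

Let set_ge0 : [set t : R | 0 <= t] = `[0%R, +oo[%classic.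
Proof. by rewrite set_itvcy. Qed.

Let measurable_ge0 : measurable [set t : R | 0 <= t].
Proof. by rewrite set_ge0; exact: measurable_itv. Qed.

Let inner_ge0 (A : set (R * R)) t : 0 <= t ->
  (0 <= \int[mu]_(x in xsection A t `&` [set x : R | (0 < x)%R])
          (beta t * powR x (- beta t - 1))%:E)%E.
Proof.
move=> t0; apply: integral_ge0 => x [_ /ltW x0]; rewrite lee_fin.
by apply: mulr_ge0; [exact/ltW/beta_gt0|exact: powR_ge0].
Qed.

Let inner_section (T B : set R) t : T t -> B `<=` [set x | 0 < x] ->
  xsection (T `*` B) t `&` [set x | 0 < x] = B.
Proof. by move=> Tt B0; rewrite xsectionX_in //; apply/setIidl. Qed.

Lemma msub_intensity_nonpos_marks (T : set R) :
  msub_intensity beta (T `*` `]-oo, 0%R]) = 0%E.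
Proof.
rewrite /msub_intensity (eq_integral (fun=> 0%E)) ?integral0 // => t _.
rewrite (_ : _ `&` _ = set0) ?integral_set0 //; apply/seteqP; split => x //=.
by move=> [/xsectionP [_ /=]]; rewrite in_itv /= => x0 /(le_lt_trans x0); rewrite ltxx.
Qed.

Lemma msub_intensity_large_marks :
  msub_intensity beta (setT `*` `[1%R, +oo[) = +oo%E.
Proof.
apply/eqP; rewrite eq_le leey /= /msub_intensity.
have h0 : 0 < 2^-1 :> R by rewrite invr_gt0.
have inner_ge t : 0 <= t -> setT t -> ((2^-1)%:E <=
    \int[mu]_(x in xsection (setT `*` `[1%R, +oo[) t `&` [set x : R | (0 < x)%R])
      (beta t * powR x (- beta t - 1))%:E)%E.
  move=> t0 _; rewrite inner_section //; last first.
    by move=> x /=; rewrite in_itv /= andbT; exact: lt_le_trans.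
  exact/integral_powR_density_tail_ge/beta_gt0.
apply: le_trans (ge0_integral_ge_scale_indic mu measurable_ge0 measurableT (ltW h0)
  (fun t t0 => inner_ge0 _ t0) inner_ge).
by rewrite setTI set_ge0 /= lebesgue_measure_itv /= ltry gt0_muley ?lte_fin.
Qed.

Lemma msub_intensity_time_strip (a b : R) : 0 <= a -> a < b ->
  msub_intensity beta (`]a, b] `*` `]0%R, +oo[) = +oo%E.
Proof.
move=> a0 ab; apply/eq_infty => r; rewrite /msub_intensity.
set M := Num.max 0 r / (b - a).
have ba : 0 < b - a by rewrite subr_gt0.
have M0 : 0 <= M by rewrite divr_ge0 ?le_max ?lexx // ltW.
have inner_ge t : 0 <= t -> `]a, b]%classic t -> (M%:E <=
    \int[mu]_(x in xsection (`]a, b] `*` `]0%R, +oo[) t `&` [set x : R | (0 < x)%R])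
      (beta t * powR x (- beta t - 1))%:E)%E.
  move=> t0 tab; rewrite inner_section //; last by move=> x /=; rewrite in_itv /= andbT.
  by rewrite integral_powR_density_eqy ?leey // beta_gt0.
apply: le_trans (ge0_integral_ge_scale_indic mu measurable_ge0 (measurable_itv _) M0
  (fun t t0 => inner_ge0 _ t0) inner_ge).
rewrite setIidl; last first.
  by move=> t /=; rewrite in_itv /= => /andP[ta _]; exact: le_trans a0 (ltW ta).
rewrite /= lebesgue_measure_itv /= lte_fin ab -EFinD -EFinM lee_fin /M divfK ?gt_eqF //.
by rewrite le_max lexx orbT.
Qed.

End msub_intensity.

Lemma itv_grid_cell_sub {R : realType} (s t : R) : 0 <= s -> s < t ->
  exists n m : nat,
    `](m%:R / n.+1%:R), (m.+1%:R / n.+1%:R)] `<=` `]s, t]%classic.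
Proof.
move=> s0 st; set n := Num.truncn (2 / (t - s)); set N : R := n.+1%:R.
have N0 : 0 < N by rewrite ltr0n.
have mesh : 2 < (t - s) * N by rewrite mulrC -ltr_pdivrMr ?subr_gt0 // truncnS_gt.
set m := (Num.truncn (s * N)).+1.
have sm : s * N < m%:R by exact: truncnS_gt.
have ms : m%:R <= s * N + 1 by rewrite -natr1 lerD2r truncn_le mulr_ge0 // ltW.
exists n, m => x /=; rewrite !in_itv /= => /andP[mx xm]; apply/andP; split.
  by apply: le_lt_trans mx; rewrite ler_pdivlMr // ltW.
by apply: le_trans xm _; rewrite ler_pdivrMr // -natr1; nra.
Qed.

Lemma prob1_ae {R : realType} {d} {Omega : measurableType d} (P : probability Omega R)
    (E : set Omega) :
  measurable E -> P E = 1%E -> {ae P, forall w, E w}.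
Proof.
move=> mE PE; exists (~` E); split => //; first exact: measurableC.
by rewrite probability_setC // PE subee.
Qed.

Section poisson_counts.
Context {R : realType} {d : measure_display} {Omega : measurableType d}.
Variables (P : probability Omega R) (nu : set (R * R) -> \bar R).
Variable Pi : Omega -> set (R * R).
Hypothesis hPi : is_poisson_point_process P nu Pi.

Let measurable_count_eq A x : measurable A ->
  measurable [set w | count_in (Pi w) A = x].
Proof.
case: hPi => mcount _ _ _ mA.
by have := mcount A mA measurableT [set x] (emeasurable_set1 _); rewrite setTI.
Qed.

Lemma ae_count_in_eq0 A : measurable A -> nu A = 0%E ->
  {ae P, forall w, count_in (Pi w) A = 0%E}.
Proof.
case: hPi => _ pcount _ _ mA nuA; apply: prob1_ae; first exact: measurable_count_eq.
have := pcount A mA; rewrite nuA => /(_ (ltry _) 0%N).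
by rewrite /pois_pmf /= expr0 fact0 divr1 oppr0 expR0 mul1r.
Qed.

Lemma ae_count_in_eqy A : measurable A -> nu A = +oo%E ->
  {ae P, forall w, count_in (Pi w) A = +oo%E}.
Proof.
case: hPi => _ _ ycount _ mA nuA; apply: prob1_ae; first exact: measurable_count_eq.
exact: ycount.
Qed.

End poisson_counts.

Theorem mainTheorem4 (R : realType) (d : measure_display) (Omega : measurableType d)
    (P : probability Omega R) (beta : R -> R)
    (beta_cont : {within [set t : R | 0 <= t], continuous beta})
    (beta_range : forall t : R, 0 <= t -> 0 < beta t < 1)
    (Pi : Omega -> set (R * R))
    (hPi : is_poisson_point_process P (msub_intensity beta) Pi) :
  {ae P, forall w,
    {within [set r : R | 0 <= r], continuous (msub_E (msub_D (Pi w)))} /\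
    {in [set r : R | 0 <= r] &, {homo msub_E (msub_D (Pi w)) : r s / r <= s}}}.
Proof.
have beta_gt0 t : 0 <= t -> 0 < beta t by move=> /beta_range /andP[].
pose cell n m : set (R * R) :=
  `](m%:R / n.+1%:R), (m.+1%:R / n.+1%:R)] `*` `]0%R, +oo[.
have no_nonpos_marks := ae_count_in_eq0 hPi
  (measurableX measurableT (measurable_itv _)) (msub_intensity_nonpos_marks beta setT).
have many_large_marks := ae_count_in_eqy hPi
  (measurableX measurableT (measurable_itv _)) (msub_intensity_large_marks beta_gt0).
have many_in_cells : {ae P, forall w n m, count_in (Pi w) (cell n m) = +oo%E}.
  apply: ae_foralln => n; apply: ae_foralln => m.
  apply: (ae_count_in_eqy hPi (measurableX (measurable_itv _) (measurable_itv _))).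
  by apply: msub_intensity_time_strip => //; rewrite ltr_pM2r ?invr_gt0 ?ltr_nat.
apply: filterS3 no_nonpos_marks many_in_cells many_large_marks => w nonpos cells large.
have marks_gt0 p : Pi w p -> 0 < p.2.
  move=> Pp; rewrite ltNge; apply/negP => p0.
  have : (1 <= count_in (Pi w) (setT `*` `]-oo, 0%R]))%E.
    by apply: count_in_ge1 Pp _; split => //=; rewrite in_itv.
  by rewrite nonpos lee_fin ler10.
have times_dense s t : 0 <= s -> s < t -> exists2 p, Pi w p & s < p.1 <= t.
  move=> s0 st; have [n [m cell_sub]] := itv_grid_cell_sub s0 st.
  have [p [Pp [/cell_sub + _]]] : Pi w `&` cell n m !=set0.
    by apply/set0P/eqP => empty; move: (cells n m); rewrite /count_in empty esum_set0.
  by rewrite /= in_itv /=; exists p.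
have D_unbounded := msub_D_unbounded large.
split; last by move=> r s _ _; exact: msub_E_nd.
apply: continuous_subspaceT; apply: msub_E_continuous D_unbounded.
- exact: msub_D_ge0.
- exact: msub_D_nd.
- exact: msub_D_strict.
Qed.
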